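(* Let $X$ be a Hausdorff $P$-space. The following are equivalent: (1) $X$ is locally Menger; (2) for each $x\in X$ and each open set $V$ with $x\in V$ there exist an open set $U$ and a Menger subspace $Y$ of $X$ such that $x\in U\subseteq Y\subseteq V$; (3) for each $x\in X$ there exists an open set $U$ with $x\in U$ such that $\overline{U}$ is Menger; (4) $X$ has a basis consisting of closed Menger neighbourhoods.
   Context: A space $X$ is Menger if for each sequence $(\mathcal{U}_n)$ of open covers of $X$ there is a sequence $(\mathcal{V}_n)$ with each $\mathcal{V}_n$ a finite subset of $\mathcal{U}_n$ and $\bigcup_{n}\bigcup\mathcal{V}_n=X$. A space $X$ is locally Menger if for each $x\in X$ there exist an open set $U$ and a Menger subspace $Y$ of $X$ with $x\in U\subseteq Y$. A $P$-space is a space in which every countable intersection of open sets is open. *)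

From HB Require Import structures.
From mathcomp Require Import all_boot all_order.
From mathcomp Require Import all_classical.
From mathcomp Require Import topology.
Set Implicit Arguments. Unset Strict Implicit. Unset Printing Implicit Defensive.
Local Open Scope classical_set_scope.

Section Defs.
Context {X : topologicalType}.

Definition rel_open (Y A : set X) : Prop :=
  exists O : set X, open O /\ A = Y `&` O.

Definition open_cover_of (Y : set X) (U : set (set X)) : Prop :=
  (forall A, U A -> rel_open Y A) /\ Y `<=` \bigcup_(A in U) A.

Definition Menger_subspace (Y : set X) : Prop :=
  forall Us : nat -> set (set X), (forall n, open_cover_of Y (Us n)) ->
  exists Vs : nat -> set (set X),
    (forall n, finite_set (Vs n) /\ Vs n `<=` Us n) /\
    Y `<=` \bigcup_n \bigcup_(A in Vs n) A.

Definition Menger_space : Prop := Menger_subspace setT.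

Definition P_space : Prop :=
  forall F : nat -> set X, (forall n, open (F n)) -> open (\bigcap_n F n).

Definition locally_Menger : Prop :=
  forall x : X, exists (U Y : set X),
    open U /\ U x /\ U `<=` Y /\ Menger_subspace Y.
End Defs.

(** In a Hausdorff P-space a Menger subspace K behaves like a compact set in
    a Hausdorff space: separating each point of K from a point x outside K,
    the Menger property selects countably many of the separating pairs that
    still cover K, and the P-property makes the countable intersection of
    the neighbourhoods of x open.  Hence Menger subspaces are closed and can
    be separated from outside points by disjoint open sets.  Closed subsets
    of Menger subspaces are Menger, so removing from a Menger neighbourhood
    Y of x an open set containing the Menger set Y \ V yields a closed
    Menger neighbourhood of x inside V; the four conditions follow. *)

From HB Require Import structures.
From mathcomp Require Import all_boot all_order.
From mathcomp Require Import all_classical.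
From mathcomp Require Import topology.
Local Open Scope classical_set_scope.

Section Menger.
Context {X : topologicalType}.
Implicit Types (x : X) (K U V Y : set X).

Definition Menger_small_nbhs : Prop :=
  forall x V, open V -> V x -> exists U Y,
    open U /\ U x /\ U `<=` Y /\ Y `<=` V /\ Menger_subspace Y.

Definition Menger_closure_nbhs : Prop :=
  forall x, exists U, open U /\ U x /\ Menger_subspace (closure U).

Definition closed_Menger_base : Prop :=
  exists B : set (set X),
    (forall A, B A -> closed A /\ Menger_subspace A) /\
    (forall x V, open V -> V x -> exists A, B A /\ nbhs x A /\ A `<=` V).

Lemma open_bigcap (I : choiceType) (D : set I) (F : I -> set X) :
  finite_set D -> (forall i, D i -> open (F i)) -> open (\bigcap_(i in D) F i).
Proof.
move=> finD oF; rewrite -closedC setC_bigcap.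
by apply: closed_bigcup finD _ => i Di; apply: open_closedC; exact: oF.
Qed.

Lemma subclosed_Menger {Y K} :
  Menger_subspace Y -> closed K -> K `<=` Y -> Menger_subspace K.
Proof.
move=> MY cK KY Us covK.
(* Lift each trace K `&` O to Y `&` O, and add Y `&` ~` K, which is open in Y. *)
pose Ys n := [set B | B = Y `&` ~` K \/
  exists O, open O /\ Us n (K `&` O) /\ B = Y `&` O].
have covY n : open_cover_of Y (Ys n).
  split=> [B [->|[O [oO [_ ->]]]]|y Yy].
  - by exists (~` K); split=> //; exact: closed_openC.
  - by exists O.
  have [Ky|nKy] := pselect (K y); last by exists (Y `&` ~` K); [left|].
  have [A UA Ay] := (covK n).2 y Ky.
  have [O [oO eA]] := (covK n).1 A UA.
  exists (Y `&` O); first by right; exists O; rewrite -eA.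
  by move: Ay; rewrite eA => -[].
have [Vs [finV covV]] := MY Ys covY.
exists (fun n => [set K `&` B | B in Vs n] `&` Us n); split.
  move=> n; split; last by move=> A [].
  apply: sub_finite_set (finite_image _ (finV n).1); exact: subIsetl.
move=> k Kk; have [n _ [B VB Bk]] := covV k (KY k Kk).
exists n => //.
have [eB|[O [_ [UO eB]]]] := (finV n).2 B VB.
  by move: Bk; rewrite eB => -[].
have KB : K `&` B = K `&` O.
  by rewrite eB setIA (setIidl KY).
exists (K `&` O); last by move: Bk; rewrite eB => -[].
by split=> //; exists B.
Qed.

Lemma Menger_countable_subcover K (f : X -> set X) :
  Menger_subspace K -> (forall z, K z -> open (f z) /\ f z z) ->
  exists F : nat -> set X, (forall n, finite_set (F n) /\ F n `<=` K) /\
    K `<=` \bigcup_n \bigcup_(z in F n) f z.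
Proof.
move=> MK fP.
have [[k0 _]|K0] := pselect (exists k, K k); last first.
  exists (fun=> set0); split=> [n|k Kk]; first by split.
  by case: K0; exists k.
pose C := [set K `&` f z | z in K].
have covC : open_cover_of K C.
  split=> [_ [z Kz <-]|k Kk]; first by exists (f z); split; [exact: (fP z Kz).1|].
  by exists (K `&` f k); [exists k | split; [|exact: (fP k Kk).2]].
have [Vs [finV covV]] := MK (fun=> C) (fun=> covC).
have [g gP] : {g : set X -> X &
    forall A, C A -> K (g A) /\ K `&` f (g A) = A}.
  apply: (@choice _ _ (fun A z => C A -> K z /\ K `&` f z = A)) => A.
  by have [[z Kz eA]|nCA] := pselect (C A); [exists z | exists k0].
exists (fun n => g @` Vs n); split.
  move=> n; split; first exact: finite_image (finV n).1.
  by move=> _ [A VA <-]; exact: (gP A ((finV n).2 A VA)).1.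
move=> k Kk; have [n _ [A VA Ak]] := covV k Kk.
exists n => //; exists (g A); first by exists A.
have [_ eA] := gP A ((finV n).2 A VA).
by have [] : (K `&` f (g A)) k by rewrite eA.
Qed.

Section HausdorffPSpace.
Hypotheses (hX : hausdorff_space X) (hP : @P_space X).

Lemma Menger_separate_point {K x} : Menger_subspace K -> ~ K x ->
  exists W O, open W /\ open O /\ W x /\ K `<=` O /\ W `&` O = set0.
Proof.
move=> MK nKx.
have [p pP] : {p : X -> set X * set X & forall z, K z ->
    [/\ open (p z).1, open (p z).2, (p z).1 z, (p z).2 x
      & (p z).1 `&` (p z).2 = set0]}.
  apply: (@choice _ _ (fun z (q : set X * set X) => K z ->
    [/\ open q.1, open q.2, q.1 z, q.2 x & q.1 `&` q.2 = set0])) => z.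
  have [Kz|nKz] := pselect (K z); last by exists (set0, set0).
  have zx : z != x by apply/eqP => ezx; apply: nKx; rewrite -ezx.
  move: hX; rewrite open_hausdorff => /(_ z x zx) [q [zq xq] [oq1 oq2 /eqP q0]].
  by exists q => _; split=> //; rewrite -inE.
have p1P z : K z -> open (p z).1 /\ (p z).1 z by case/pP.
have [F [finF covF]] := Menger_countable_subcover K (fun z => (p z).1) MK p1P.
have pF n z : F n z -> _ := fun Fz => pP z ((finF n).2 z Fz).
exists (\bigcap_n \bigcap_(z in F n) (p z).2),
       (\bigcup_n \bigcup_(z in F n) (p z).1).
split; [|split; [|split; [|split]]].
- apply: hP => n; apply: open_bigcap (finF n).1 _ => z Fz.
  by case: (pF n z Fz).
- by apply: bigcup_open => n _; apply: bigcup_open => z Fz; case: (pF n z Fz).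
- by move=> n _ z Fz; case: (pF n z Fz).
- exact: covF.
apply/seteqP; split=> // y [Wy [n _ [z Fz zy]]].
have [_ _ _ _ <-] := pF n z Fz.
by split=> //; exact: Wy n I z Fz.
Qed.

Lemma Menger_closed {K} : Menger_subspace K -> closed K.
Proof.
move=> MK; rewrite -openC openE => y nKy.
have [W [O [oW [_ [Wy [KO WO]]]]]] := Menger_separate_point MK nKy.
apply: filterS (open_nbhs_nbhs (conj oW Wy)) => w Ww Kw.
by rewrite -[False]/(set0 w) -WO; split=> //; exact: KO.
Qed.

Lemma locally_Menger_small_nbhs : @locally_Menger X -> Menger_small_nbhs.
Proof.
move=> lMX x V oV Vx; have [U [Y [oU [Ux [UY MY]]]]] := lMX x.
have cY := Menger_closed MY.
have MYC O : open O -> Menger_subspace (Y `&` ~` O).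
  move=> oO; apply: subclosed_Menger MY _ (@subIsetl _ _ _).
  exact: closedI cY (open_closedC oO).
have [W [O [oW [oO [Wx [KO WO]]]]]] :=
  @Menger_separate_point (Y `&` ~` V) x (MYC V oV) (fun '(conj _ nVx) => nVx Vx).
have UWYO : U `&` W `<=` Y `&` ~` O.
  move=> w [Uw Ww]; split; first exact: UY.
  by move=> Ow; rewrite -[False]/(set0 w) -WO.
have YOV : Y `&` ~` O `<=` V.
  by move=> w [Yw nOw]; apply: contrapT => nVw; exact/nOw/KO.
exists (U `&` W), (Y `&` ~` O).
by do !split=> //; [exact: openI | exact: MYC].
Qed.

Lemma locally_Menger_closure_nbhs : @locally_Menger X -> Menger_closure_nbhs.
Proof.
move=> lMX x; have [U [Y [oU [Ux [UY MY]]]]] := lMX x.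
exists U; split=> //; split=> //.
apply: (subclosed_Menger MY (@closed_closure _ U)).
by rewrite ((closure_id Y).1 (Menger_closed MY)); exact: closureS.
Qed.

Lemma locally_Menger_closed_base : @locally_Menger X -> closed_Menger_base.
Proof.
move=> /locally_Menger_small_nbhs sMX.
exists [set A | closed A /\ Menger_subspace A]; split=> // x V oV Vx.
have [U [Y [oU [Ux [UY [YV MY]]]]]] := sMX x V oV Vx.
exists Y; split; first by split=> //; exact: Menger_closed.
by split=> //; apply: filterS UY _; exact: open_nbhs_nbhs.
Qed.

End HausdorffPSpace.

Lemma Menger_small_nbhs_locally_Menger :
  Menger_small_nbhs -> @locally_Menger X.
Proof.
move=> sMX x; have [U [Y [oU [Ux [UY [_ MY]]]]]] := sMX x setT openT I.
by exists U, Y.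
Qed.

Lemma Menger_closure_nbhs_locally_Menger :
  Menger_closure_nbhs -> @locally_Menger X.
Proof.
move=> cMX x; have [U [oU [Ux MU]]] := cMX x.
by exists U, (closure U); do !split=> //; exact: subset_closure.
Qed.

Lemma closed_Menger_base_locally_Menger :
  closed_Menger_base -> @locally_Menger X.
Proof.
move=> [B [BM Bbase]] x; have [A [BA [+ _]]] := Bbase x setT openT I.
rewrite nbhsE => -[U [oU Ux] UA].
by exists U, A; do !split=> //; case: (BM A BA).
Qed.

End Menger.

Theorem theorem3p7 (X : topologicalType) :
  hausdorff_space X -> @P_space X ->
  let c1 := @locally_Menger X in
  let c2 := forall (x : X) (V : set X), open V -> V x ->
      exists (U Y : set X), open U /\ U x /\ U `<=` Y /\ Y `<=` V /\
        Menger_subspace Y in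
  let c3 := forall x : X, exists U : set X,
      open U /\ U x /\ Menger_subspace (closure U) in
  let c4 := exists B : set (set X),
      (forall A, B A -> closed A /\ Menger_subspace A) /\
      (forall (x : X) (V : set X), open V -> V x ->
         exists A, B A /\ nbhs x A /\ A `<=` V) in
  (c1 <-> c2) /\ (c1 <-> c3) /\ (c1 <-> c4).
Proof.
move=> hX hP c1 c2 c3 c4.
split; [|split]; split.
- exact: locally_Menger_small_nbhs.
- exact: Menger_small_nbhs_locally_Menger.
- exact: locally_Menger_closure_nbhs.
- exact: Menger_closure_nbhs_locally_Menger.
- exact: locally_Menger_closed_base.
- exact: closed_Menger_base_locally_Menger.
Qed.
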